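(* Let $k\ge1$, let $M=\Gamma(\mathbb Z\,\overrightarrow{\times}\,G,(k,0))$ with $G$ a Dedekind $\sigma$-complete $\ell$-group, and let $F:\mathbb R^2\to M$ be a two-dimensional spectral resolution. Then for each $i\in\{1,\ldots,k\}$ with $T_i\neq\emptyset$, $T_i$ has at most $k-i+1$ characteristic points; consequently $F$ has at most $k(k+1)/2$ characteristic points.
   Context: $\mathbb Z\,\overrightarrow{\times}\,G$ is $\mathbb Z\times G$ with lexicographic order; $\Gamma(K,v)=([0,v];\oplus,',0,v)$ with $a\oplus b=(a+b)\wedge v$. A two-dimensional spectral resolution is $F:\mathbb R^2\to M$ such that: $F$ is monotone; $\bigvee_{(s,t)}F(s,t)=1$; $F(s,t)=\bigvee_{(s',t')\ll(s,t)}F(s',t')$; $\bigwedge_sF(s,t)=0=\bigwedge_tF(s,t)$; $0\le F(b_1,b_2)-F(a_1,b_2)-F(b_1,a_2)+F(a_1,a_2)\le1$ for $a_i\le b_i$ (in the group). $M_j=\{(j,g)\in M\}$, $T_j=\{(s,t)\colon F(s,t)\in M_j\}$. For $i\ge1$ and $(s,t)\in T_i$, $\pi_i(s,t)=(\inf\{r\colon(r,t)\in T_i\},\inf\{r\colon(s,r)\in T_i\})$; characteristic points of $T_i$ are the $\pi_i(s,t)$, $(s,t)\in T_i$; characteristic points of $F$ are those of the $T_i$, $i\ge1$. *)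

From Stdlib Require Import Reals ZArith List.
From mathcomp Require Import all_boot all_algebra.
Set Implicit Arguments. Unset Strict Implicit. Unset Printing Implicit Defensive.

(* G (an additive abelian group, zmodType) with a relation [le] is a
   Dedekind sigma-complete l-group: [le] is a translation invariant partial
   order, any two elements have a supremum (lattice; infima then exist in any
   po-group), and every sequence bounded above has a supremum. *)
Definition is_dsc_lgroup (G : zmodType) (le : G -> G -> Prop) : Prop :=
  (forall x, le x x) /\
      (forall x y, le x y -> le y x -> x = y) /\
      (forall x y z, le x y -> le y z -> le x z) /\
      (forall x y z, le x y -> le (GRing.add x z) (GRing.add y z)) /\
      (forall x y : G, exists s, [/\ le x s, le y s &
                         forall u, le x u -> le y u -> le s u]) /\
      (forall u : nat -> G, (exists b, forall n, le (u n) b) ->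
         exists s, (forall n, le (u n) s) /\
                   (forall b, (forall n, le (u n) b) -> le s b)).

Section Lex.
Variables (G : zmodType) (le : G -> G -> Prop) (k : nat).

Definition lexle (x y : Z * G) : Prop :=
  Z.lt (fst x) (fst y) \/ (fst x = fst y /\ le (snd x) (snd y)).
Definition lexadd (x y : Z * G) : Z * G := (Z.add (fst x) (fst y), GRing.add (snd x) (snd y)).
Definition lexsub (x y : Z * G) : Z * G := (Z.sub (fst x) (fst y), GRing.add (snd x) (GRing.opp (snd y))).

Definition lex0 : Z * G := (Z0, GRing.zero).
Definition lextop : Z * G := (Z.of_nat k, GRing.zero).

Definition inM (x : Z * G) : Prop := lexle lex0 x /\ lexle x lextop.

Definition IsSupM (S : Z * G -> Prop) (x : Z * G) : Prop :=
  [/\ inM x, (forall y, S y -> lexle y x) &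
      (forall z, inM z -> (forall y, S y -> lexle y z) -> lexle x z)].
Definition IsInfM (S : Z * G -> Prop) (x : Z * G) : Prop :=
  [/\ inM x, (forall y, S y -> lexle x y) &
      (forall z, inM z -> (forall y, S y -> lexle z y) -> lexle z x)].

Definition spectral_resolution2 (F : R -> R -> Z * G) : Prop :=
  (forall s t, inM (F s t)) /\
      (forall s t s' t', Rle s s' -> Rle t t' -> lexle (F s t) (F s' t')) /\
      IsSupM (fun x => exists s t, x = F s t) lextop /\
      (forall s t, IsSupM (fun x => exists s' t',
                     [/\ Rlt s' s, Rlt t' t & x = F s' t']) (F s t)) /\
      (forall t, IsInfM (fun x => exists s, x = F s t) lex0) /\
      (forall s, IsInfM (fun x => exists t, x = F s t) lex0) /\
      (forall a1 a2 b1 b2, Rle a1 b1 -> Rle a2 b2 ->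
         let D := lexadd (lexsub (lexsub (F b1 b2) (F a1 b2)) (F b1 a2)) (F a1 a2) in
         lexle lex0 D /\ lexle D lextop).

(* T_i = {(s,t) : F(s,t) in M_i} *)
Definition Tset (F : R -> R -> Z * G) (i : nat) (s t : R) : Prop :=
  fst (F s t) = Z.of_nat i.

Definition is_glb (E : R -> Prop) (m : R) : Prop :=
  (forall r, E r -> Rle m r) /\
  (forall m', (forall r, E r -> Rle m' r) -> Rle m' m).

(* p = pi_i(s,t) for some (s,t) in T_i (the infima are real infima) *)
Definition charpt_T (F : R -> R -> Z * G) (i : nat) (p : R * R) : Prop :=
  exists s t, [/\ Tset F i s t,
                  is_glb (fun r => Tset F i r t) (fst p) &
                  is_glb (fun r => Tset F i s r) (snd p)].

Definition charpt_F (F : R -> R -> Z * G) (p : R * R) : Prop :=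
  exists i, (1 <= i)%N /\ charpt_T F i p.

End Lex.

From Stdlib Require Import Reals ZArith List Lia Lra Classical.
From mathcomp Require Import all_boot all_algebra zify.

(* Only the first coordinate f(s,t) of F(s,t) matters.  It is an integer in
   [0,k], monotone, supermodular (the volume condition), and, because F(s,t)
   is the supremum in the lexicographic order of the values strictly below
   (s,t), it is attained strictly below every point.  No characteristic point of
   T_i lies weakly to the right of and strictly above another, so they are
   determined by their abscissae.  Each abscissa a is a point where some row
   f(.,t) crosses level i; on a row t = Y above all these witnesses,
   supermodularity makes f(.,Y) jump by at least one across every abscissa,
   which leaves room for at most k - i + 1 of them in [i, k].  Summing over
   i = 1..k gives k(k+1)/2. *)

Set Implicit Arguments. Unset Strict Implicit.
Import GRing.Theory.

Local Open Scope Z_scope.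

Lemma length_le_of_inj_Zinterval (A : Type) (l : list A) (phi : A -> Z) (lo hi : Z) :
  NoDup l -> (forall x y, In x l -> In y l -> phi x = phi y -> x = y) ->
  (forall x, In x l -> lo <= phi x <= hi) ->
  (length l <= Z.to_nat (hi - lo + 1))%N.
Proof.
move=> nd_l inj_phi range_phi.
pose psi x := Z.to_nat (phi x - lo).
have nd_psi : NoDup (map psi l).
  apply: NoDup_map_NoDup_ForallPairs nd_l => x y lx ly.
  have := range_phi x lx; have := range_phi y ly; rewrite /psi => ? ? ?.
  by apply: inj_phi => //; lia.
have sub_psi : incl (map psi l) (List.seq 0%N (Z.to_nat (hi - lo + 1))).
  move=> _ /in_map_iff [x [<- lx]]; apply/in_seq.
  by have := range_phi x lx; rewrite /psi; lia.
by have := NoDup_incl_length nd_psi sub_psi; rewrite length_map length_seq; lia.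
Qed.

Lemma cover_of_NoDup_length_le (A : Type) (P : A -> Prop) (B : nat) :
  (forall l, NoDup l -> (forall x, In x l -> P x) -> (length l <= B)%N) ->
  exists l, (length l <= B)%N /\ forall x, P x -> In x l.
Proof.
move=> bound.
have covered_or_new l0 : (forall x, P x -> In x l0) \/ exists x, P x /\ ~ In x l0.
  case: (classic (exists x, P x /\ ~ In x l0)) => [|none]; [by right | left => x Px].
  by apply: NNPP => x_l0; apply: none; exists x.
suff grow d l0 : NoDup l0 -> (forall x, In x l0 -> P x) -> (B - length l0 <= d)%N ->
    exists l, (length l <= B)%N /\ forall x, P x -> In x l.
  by apply: (grow B nil); [constructor | | lia].
elim: d l0 => [|d IH] l0 nd0 P0 small; have [covers|[x [Px x_l0]]] := covered_or_new l0;
  try by exists l0; split => //; apply: bound.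
all: have P1 : forall y, In y (x :: l0) -> P y by move=> y [<-|/P0].
- by have /= := bound (x :: l0) (NoDup_cons x x_l0 nd0) P1; lia.
- by apply: (IH (x :: l0)) => //=; [constructor | lia].
Qed.

Lemma cover_union (A : Type) (P : nat -> A -> Prop) (b : nat -> nat) (m : nat) :
  (forall j, (j < m)%N -> exists l, (length l <= b j)%N /\ forall x, P j x -> In x l) ->
  exists l, (length l <= \sum_(j < m) b j)%N /\
            forall j x, (j < m)%N -> P j x -> In x l.
Proof.
elim: m => [|m IH] covers.
  by exists nil; split => [|j x]; rewrite ?ltn0.
have [l1 [len1 cov1]] := covers m (ltnSn m).
have [l2 [len2 cov2]] := IH (fun j lt_jm => covers j (ltnW lt_jm)).
exists (l1 ++ l2); split.
  by rewrite length_app big_ord_recr plusE addnC; apply: leq_add.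
move=> j x; rewrite ltnS leq_eqVlt => /orP [/eqP -> | lt_jm] Pjx; apply/in_or_app.
- by left; apply: cov1.
- by right; apply: (cov2 j).
Qed.

Lemma sum_ord_succ (n : nat) : (\sum_(j < n) j.+1 = n * (n + 1) %/ 2)%N.
Proof.
have -> : (n * (n + 1) %/ 2 = 'C(n.+1, 2))%N by rewrite bin2 divn2 addn1 mulnC.
by rewrite -bin2_sum big_nat_recl // big_mkord.
Qed.

Lemma list_common_bound (A : Type) (P : A -> R -> Prop) (l : list A) :
  (forall a, In a l -> exists t, P a t) ->
  exists Y, forall a, In a l -> exists t, Rle t Y /\ P a t.
Proof.
elim: l => [|a l IH] witnesses; first by exists R0.
have [Y HY] := IH (fun b lb => witnesses b (or_intror lb)).
have [t Pat] := witnesses a (or_introl erefl).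
exists (Rmax t Y) => b [<-|lb]; first by exists t; split => //; apply: Rmax_l.
have [t' [le_t'Y Pbt']] := HY b lb.
by exists t'; split => //; apply: Rle_trans le_t'Y (Rmax_r _ _).
Qed.

Definition crosses_at (g : R -> Z) (n : Z) (a : R) : Prop :=
  (forall x, Rle x a -> g x < n) /\ (forall x, Rlt a x -> n <= g x).

Lemma glb_level_set_crosses (g : R -> Z) (n : Z) (s a : R) :
  (forall x y, Rle x y -> g x <= g y) ->
  (forall x, exists x', Rlt x' x /\ g x <= g x') ->
  g s = n -> is_glb (fun r => g r = n) a -> Rlt a s /\ crosses_at g n a.
Proof.
move=> mono attained gs [lb greatest].
have left_of x : Rlt x a -> g x < n.
  move=> lt_xa; have := mono x s ltac:(have := lb s gs; lra).
  by case: (Z.eq_dec (g x) n) => [/lb|]; [lra | lia].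
have up_to x : Rle x a -> g x < n.
  move=> le_xa; have [x' [lt_x'x le_gx]] := attained x.
  by have := left_of x' ltac:(lra); lia.
have above x : Rlt a x -> n <= g x.
  move=> lt_ax; apply/Z.nlt_ge => lt_gx.
  suff : Rle x a by lra.
  apply: greatest => r gr; apply: Rnot_lt_le => lt_rx.
  by have := mono r x (Rlt_le _ _ lt_rx); lia.
split=> //; case: (Rle_lt_or_eq_dec a s (lb s gs)) => // eq_as.
by have := up_to s ltac:(lra); lia.
Qed.

Record level_function (f : R -> R -> Z) (K : Z) : Prop := {
  level_le_top : forall s t, f s t <= K;
  level_monotone : forall s t s' t', Rle s s' -> Rle t t' -> f s t <= f s' t';
  level_supermodular : forall a1 a2 b1 b2, Rle a1 b1 -> Rle a2 b2 ->
    f b1 a2 + f a1 b2 <= f b1 b2 + f a1 a2;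
  level_attained_below : forall s t,
    exists s' t', [/\ Rlt s' s, Rlt t' t & f s t <= f s' t'] }.

(* [charpt_T F i] is [charpt (fun s t => (F s t).1) (Z.of_nat i)] by conversion. *)
Definition charpt (f : R -> R -> Z) (n : Z) (p : R * R) : Prop :=
  exists s t, [/\ f s t = n, is_glb (fun r => f r t = n) p.1 &
                  is_glb (fun r => f s r = n) p.2].

Section LevelFunction.
Variables (f : R -> R -> Z) (K : Z).
Hypothesis hf : level_function f K.

Lemma level_attained_left t x : exists x', Rlt x' x /\ f x t <= f x' t.
Proof.
have [x' [y' [lt_x' lt_y' le_f]]] := level_attained_below hf x t.
by exists x'; have := level_monotone hf (Rle_refl x') (Rlt_le _ _ lt_y'); split => //; lia.
Qed.

Lemma level_attained_down s y : exists y', Rlt y' y /\ f s y <= f s y'.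
Proof.
have [x' [y' [lt_x' lt_y' le_f]]] := level_attained_below hf s y.
by exists y'; have := level_monotone hf (Rlt_le _ _ lt_x') (Rle_refl y'); split => //; lia.
Qed.

Lemma charpt_crossing n p : charpt f n p ->
  exists s t, [/\ f s t = n, Rlt p.1 s, Rlt p.2 t,
                  crosses_at (f^~ t) n p.1 & crosses_at (f s) n p.2].
Proof.
case=> s [t [f_st glb_row glb_col]]; exists s, t.
have [lt_s row] := glb_level_set_crosses
  (fun x y le_xy => level_monotone hf le_xy (Rle_refl t)) (level_attained_left t) f_st glb_row.
have [lt_t col] := glb_level_set_crosses
  (fun x y le_xy => level_monotone hf (Rle_refl s) le_xy) (level_attained_down s) f_st glb_col.
by split.
Qed.

Lemma charpt_antichain n p1 p2 : charpt f n p1 -> charpt f n p2 ->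
  Rle p1.1 p2.1 -> Rlt p1.2 p2.2 -> False.
Proof.
move=> /charpt_crossing [s1 [t1 [f1 lt_s1 lt_t1 [_ row1] [_ col1]]]].
move=> /charpt_crossing [s2 [t2 [_ lt_s2 _ _ [col2 _]]]] le_fst lt_snd.
(* Supermodularity on [x, s1] x [y, t1] forces n <= f x y, while f x y <= f s2 y < n. *)
pose x := Rmin s1 s2; pose y := Rmin p2.2 t1.
have lt_x : Rlt p1.1 x by apply: Rmin_glb_lt; lra.
have lt_y : Rlt p1.2 y by apply: Rmin_glb_lt; lra.
have := row1 x lt_x; have := col1 y lt_y; have := col2 y (Rmin_l _ _).
have := level_supermodular hf (Rmin_l s1 s2) (Rmin_r p2.2 t1).
have := level_monotone hf (Rmin_r s1 s2) (Rle_refl y).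
rewrite /x /y /=; lia.
Qed.

Lemma charpt_inj_fst n p1 p2 : charpt f n p1 -> charpt f n p2 -> p1.1 = p2.1 -> p1 = p2.
Proof.
move=> c1 c2 eq_fst.
case: (Rtotal_order p1.2 p2.2) => [lt|[eq_snd|gt]].
- by case: (charpt_antichain c1 c2 (Req_le _ _ eq_fst) lt).
- exact: injective_projections.
- by case: (charpt_antichain c2 c1 (Req_le _ _ (esym eq_fst)) gt).
Qed.

Lemma crossing_abscissae_length n (l : list R) : NoDup l ->
  (forall a, In a l -> exists t, crosses_at (f^~ t) n a) ->
  (length l <= Z.to_nat (K - n + 1))%N.
Proof.
move=> nd_l crossings.
have [Y HY] := list_common_bound crossings.
(* Supermodularity on [a, a'] x [t, Y] gives f a Y < f a' Y whenever a < a' are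
   crossing abscissae, so phi is strictly increasing on l with values in [n, K]. *)
pose phi a := Z.max (f a Y + 1) n.
have phi_lt a a' : In a l -> Rlt a a' -> phi a < phi a'.
  move=> la lt_aa'; have [t [le_tY [at_a above]]] := HY a la.
  have := at_a a (Rle_refl a); have := above a' lt_aa'.
  have := level_supermodular hf (Rlt_le _ _ lt_aa') le_tY.
  have := level_monotone hf (Rle_refl a') le_tY.
  rewrite /phi /=; lia.
apply: (length_le_of_inj_Zinterval (phi := phi)) => // [a b la lb eq_phi|a la].
  case: (Rtotal_order a b) => [lt|[//|gt]].
  - by have := phi_lt a b la lt; lia.
  - by have := phi_lt b a lb gt; lia.
have [t [le_tY [_ above]]] := HY a la.
have := phi_lt a (Rplus a 1) la ltac:(lra).
have := above (Rplus a 1) ltac:(lra).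
have := level_le_top hf (s := Rplus a 1) (t := Y).
have := level_le_top hf (s := Rplus a 1) (t := t).
rewrite /phi /=; lia.
Qed.

Lemma charpt_cover n :
  exists l, (length l <= Z.to_nat (K - n + 1))%N /\ forall p, charpt f n p -> In p l.
Proof.
apply: cover_of_NoDup_length_le => l nd_l charpts.
rewrite -(length_map fst); apply: crossing_abscissae_length.
  apply: NoDup_map_NoDup_ForallPairs nd_l => p1 p2 l1 l2.
  exact: charpt_inj_fst (charpts _ l1) (charpts _ l2).
move=> _ /in_map_iff [p [<- lp]].
have [s [t [_ _ _ row _]]] := charpt_crossing (charpts _ lp).
by exists t.
Qed.
End LevelFunction.

Section LexicographicOrder.
Variables (G : zmodType) (le : G -> G -> Prop) (k : nat).
Hypotheses (le_refl : forall x, le x x)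
           (le_anti : forall x y, le x y -> le y x -> x = y)
           (le_trans : forall x y z, le x y -> le y z -> le x z)
           (le_add : forall x y z, le x y -> le (x + z)%R (y + z)%R)
           (le_directed : forall x y, exists s, le x s /\ le y s).

Lemma lexle_fst (x y : Z * G) : lexle le x y -> x.1 <= y.1.
Proof. by case=> [|[->]]; lia. Qed.

Lemma nontrivial_exists_pos : (exists x : G, x <> 0%R) -> exists e : G, le 0%R e /\ e <> 0%R.
Proof.
case=> x x_nz; have [s [le_xs le_0s]] := le_directed x 0%R.
case: (classic (s = 0%R)) => [s0 | s_nz]; last by exists s.
exists (- x)%R; split; last by move/eqP; rewrite oppr_eq0 => /eqP.
by move: le_xs; rewrite s0 => /(le_add (- x)%R); rewrite addrN add0r.
Qed.

Lemma lex_strict_upper_bound (x : Z * G) : inM le k x -> 0 < x.1 ->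
  exists z, [/\ inM le k z, ~ lexle le x z & forall y, y.1 < x.1 -> lexle le y z].
Proof.
case: x => j g [_ x_top] /= j_pos.
case: (classic (exists e : G, e <> 0%R)) => [/nontrivial_exists_pos [e [e_pos e_nz]] | G_trivial].
- have le_ge : le (g - e)%R g.
    by have := le_add (g - e)%R e_pos; rewrite add0r [(e + _)%R]addrC subrK.
  exists (j, g - e)%R; split => [|[/=|[_ /= le_g]]|y lt_y]; last by left.
  + split; first by left.
    case: x_top => [lt_top|[eq_top le_g0]]; first by left.
    by right; split => //; apply: le_trans le_ge le_g0.
  + lia.
  + apply: e_nz; apply: (addrI g); rewrite addr0; apply: le_anti.
      by have := le_add e le_g; rewrite subrK.
    by have := le_add g e_pos; rewrite add0r addrC.
- have G0 (u : G) : u = 0%R by apply: NNPP => u_nz; apply: G_trivial; exists u.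
  exists (j - 1, 0%R); split => [|/lexle_fst /=|y lt_y]; first split.
  + case: (Z.eq_dec j 1) => [->|]; [by right | left => /=; lia].
  + by left; have := lexle_fst x_top => /=; lia.
  + lia.
  + case: (Z.eq_dec y.1 (j - 1)) => [eq_y|]; [right | left => /=; lia].
    by split => //; rewrite (G0 y.2).
Qed.

Lemma IsSupM_fst_attained (S : Z * G -> Prop) (x y0 : Z * G) :
  IsSupM le k S x -> S y0 -> 0 <= y0.1 -> exists y, S y /\ x.1 <= y.1.
Proof.
move=> [x_M _ least] S_y0 y0_pos; apply: NNPP => none.
have below y : S y -> y.1 < x.1.
  by move=> S_y; apply/Z.nle_gt => le_xy; apply: none; exists y.
have x_pos : 0 < x.1 by have := below y0 S_y0; lia.
have [z [z_M not_le_xz z_ub]] := lex_strict_upper_bound x_M x_pos.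
by apply: not_le_xz; apply: (least z z_M) => y /below /z_ub.
Qed.

Lemma spectral_level_function (F : R -> R -> Z * G) :
  spectral_resolution2 le k F -> level_function (fun s t => (F s t).1) (Z.of_nat k).
Proof.
move=> [F_M [F_mono [_ [F_sup [_ [_ F_vol]]]]]]; split.
- by move=> s t; have [_ /lexle_fst] := F_M s t.
- by move=> s t s' t' le_s le_t; apply/lexle_fst/F_mono.
- move=> a1 a2 b1 b2 le_1 le_2; have [/lexle_fst + _] := F_vol a1 a2 b1 b2 le_1 le_2.
  by rewrite /lexadd /lexsub /=; lia.
- move=> s t.
  have [lo_M _] := F_M (Rminus s 1) (Rminus t 1).
  have S_lo : exists s' t', [/\ Rlt s' s, Rlt t' t & F (Rminus s 1) (Rminus t 1) = F s' t'].
    by exists (Rminus s 1), (Rminus t 1); split => //; lra.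
  have [_ [[s' [t' [lt_s lt_t ->]]] le_fst]] :=
    IsSupM_fst_attained (F_sup s t) S_lo (lexle_fst lo_M).
  by exists s', t'.
Qed.
End LexicographicOrder.

Theorem theorem4p10 (k : nat) (G : zmodType) (le : G -> G -> Prop)
    (F : R -> R -> Z * G) :
  (1 <= k)%N -> is_dsc_lgroup le -> spectral_resolution2 le k F ->
  (forall i : nat, (1 <= i <= k)%N -> (exists s t, Tset F i s t) ->
     exists l : list (R * R), (length l <= k - i + 1)%N /\
       (forall p, charpt_T F i p -> In p l)) /\
  (exists l : list (R * R), (length l <= k * (k + 1) %/ 2)%N /\
       (forall p, charpt_F F p -> In p l)).
Proof.
move=> _ [le_refl [le_anti [le_trans [le_add [le_join _]]]]] F_spec.
have le_directed x y : exists s, le x s /\ le y s.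
  by have [s [? ? _]] := le_join x y; exists s.
have hf := spectral_level_function le_refl le_anti le_trans le_add le_directed F_spec.
have cover i : (i <= k)%N -> exists l : list (R * R),
    (length l <= k - i + 1)%N /\ forall p, charpt_T F i p -> In p l.
  by move=> le_ik; have [l [len_l cov]] := charpt_cover hf (Z.of_nat i); exists l; split => //; lia.
split => [i /andP [_ le_ik] _ | ]; first exact: cover.
have cover_rev j : (j < k)%N -> exists l : list (R * R),
    (length l <= j.+1)%N /\ forall p, charpt_T F (k - j) p -> In p l.
  by move=> lt_jk; have [l [len_l cov]] := cover (k - j)%N (leq_subr j k); exists l; split => //; lia.
have [l [len_l cov]] := cover_union cover_rev.
exists l; split; first by rewrite -sum_ord_succ.
move=> p [i [i_pos cp_i]].
have le_ik : (i <= k)%N.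
  by case: cp_i => s [t [T_st _ _]]; have := level_le_top hf (s := s) (t := t); rewrite /= T_st; lia.
by apply: (cov (k - i)%N); rewrite ?subKn //; lia.
Qed.
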